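(* Let $f:\mathbb{Z}^n\to\mathbb{R}\cup\{+\infty\}$ be an M-convex function with bounded $\operatorname{dom} f$, and let $x\in\operatorname{dom} f$ with $\phi(x)<0$. Consider the procedure M-IncSlope$(x)$: set $y:=x$; then for each $i\in N$ (each taken exactly once, in an arbitrary order) and, for this $i$, for each $j\in N\setminus\{i\}$ (each taken exactly once, in an arbitrary order), if $f'(y;i,j)=\phi(x)$ then replace $y$ by $y+\bar c(y;i,j)(\chi_i-\chi_j)$; finally output $x':=y$. Then, for every choice of the orders, the output satisfies $\phi(x')>\phi(x)$.
   Context: $N=\{1,\dots,n\}$; $\chi_i\in\{0,1\}^n$ is the $i$-th unit vector. For $f:\mathbb{Z}^n\to\mathbb{R}\cup\{+\infty\}$, $\operatorname{dom} f=\{x\in\mathbb{Z}^n: f(x)<+\infty\}$. $f$ is M-convex if $\operatorname{dom} f\neq\emptyset$ and for all $x,y\in\operatorname{dom} f$ and every $i$ with $x(i)>y(i)$ there is $j$ with $x(j)<y(j)$ such that $f(x)+f(y)\ge f(x-\chi_i+\chi_j)+f(y+\chi_i-\chi_j)$. For $x\in\operatorname{dom} f$ and $i,j\in N$, $f'(x;i,j)=f(x+\chi_i-\chi_j)-f(x)$ (possibly $+\infty$; $f'(x;i,i)=0$), and $\phi(x)=\min_{i,j\in N}f'(x;i,j)$. For $y\in\operatorname{dom} f$ and $i,j$ with $f'(y;i,j)$ finite, the step length is $\bar c(y;i,j)=\max\{\lambda\in\mathbb{Z}_{\ge 0}: f(y+\lambda(\chi_i-\chi_j))-f(y)=\lambda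 f'(y;i,j)\}$ (finite since $\operatorname{dom} f$ is bounded). *)

From HB Require Import structures.
From mathcomp Require Import all_boot all_order all_algebra.
From mathcomp Require Import all_classical all_reals ereal.
Set Implicit Arguments. Unset Strict Implicit. Unset Printing Implicit Defensive.
Import Order.TTheory GRing.Theory Num.Theory.
Local Open Scope ring_scope.
Local Open Scope ereal_scope.

(* Points of Z^n are functions 'I_n -> int; N = 'I_n. *)
Definition pt (n : nat) := 'I_n -> int.

Definition chi {n : nat} (i : 'I_n) : pt n := fun k => ((k == i) : nat)%:Z.

Definition move {n : nat} (x : pt n) (lam : int) (i j : 'I_n) : pt n :=
  fun k => (x k + lam * (chi i k - chi j k))%R.

Section Mconv.
Variables (R : realType) (n : nat) (f : pt n -> \bar R).

Definition dom (x : pt n) : Prop := f x < +oo.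

Definition Mconvex : Prop :=
  (exists x, dom x) /\
  forall x y : pt n, dom x -> dom y -> forall i : 'I_n, (y i < x i)%R ->
    exists j : 'I_n, (x j < y j)%R /\
      f (move x (-1) i j) + f (move y 1 i j) <= f x + f y.

Definition dom_bounded : Prop :=
  exists B : int, forall x : pt n, dom x -> forall k, (`|x k| <= B)%R.

Definition fder (x : pt n) (i j : 'I_n) : \bar R := f (move x 1 i j) - f x.

Definition phi (x : pt n) : \bar R :=
  \big[Order.min/+oo]_(i < n) \big[Order.min/+oo]_(j < n) fder x i j.

Definition lin_step (y : pt n) (i j : 'I_n) (lam : nat) : Prop :=
  f (move y lam%:Z i j) - f y = (lam%:R)%:E * fder y i j.

(* step length: the maximum such lambda (exists when dom f is bounded and
   f'(y;i,j) is finite); chosen by classical description. *)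
Definition cbar (y : pt n) (i j : 'I_n) : nat :=
  xget 0%N (fun c => lin_step y i j c /\ forall l, lin_step y i j l -> (l <= c)%N).

Definition incstep (phix : \bar R) (y : pt n) (ij : 'I_n * 'I_n) : pt n :=
  if fder y ij.1 ij.2 == phix then move y (cbar y ij.1 ij.2)%:Z ij.1 ij.2 else y.

(* M-IncSlope(x) with outer order sigma on N and, for each i, inner order
   tau i on N \ {i}. *)
Definition M_IncSlope (x : pt n) (sigma : seq 'I_n) (tau : 'I_n -> seq 'I_n) : pt n :=
  foldl (incstep (phi x)) x [seq (i, j) | i <- sigma, j <- tau i].

End Mconv.

From HB Require Import structures.
From mathcomp Require Import all_boot all_order all_algebra.
From mathcomp Require Import all_classical all_reals ereal.
From mathcomp Require Import lra ring zify.
Set Implicit Arguments. Unset Strict Implicit. Unset Printing Implicit Defensive.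
Import Order.TTheory GRing.Theory Num.Theory.
Local Open Scope ring_scope.
Local Open Scope ereal_scope.

(** Let [a = phi(x) < 0].  The procedure preserves the invariant that all
    slopes [f'(y;i,j)] stay [>= a], and every row [i] already processed keeps
    [f'(y;i,j) > a] for all [j <> i].  For a single unit move along a minimal
    slope [(k,l)], both facts come from one M-convex exchange between
    [y + chi_k - chi_l + chi_i - chi_j] and [y] at coordinate [k]: the
    exchanged index is [l] or [j], and either case bounds the new slope
    [f'(y';i,j)] from below by old slopes.  A long step of length
    [cbar(y;k,l)] is a sequence of such unit moves: since [f] is convex along
    the line, a slope [> a] at some intermediate point would make
    [f(y + cbar (chi_k - chi_l))] exceed its linear value, so every unit slope
    on the way equals [a], while maximality of [cbar] makes the final slope
    along [(k,l)] exceed [a].  After the pass over row [i] the whole row is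
    thus [> a], and after all rows [phi(x') > a]. *)

Lemma lee_exchange (R : realType) (a r : R) (A B W : \bar R) :
  A != -oo -> B != -oo -> W != -oo ->
  A + B <= W + r%:E -> a%:E <= B - r%:E -> A - r%:E <= W - (r + a)%:E.
Proof.
case: A => [x| |]; case: B => [y| |]; case: W => [w| |] //= _ _ _.
all: rewrite -?EFinD -?EFinB ?lee_fin //.
- by move=> *; lra.
all: by move=> *; rewrite addye // leey.
Qed.

Lemma lte_sub_addr_lt0 (R : realType) (a r : R) (W : \bar R) :
  (a < 0)%R -> W != -oo -> a%:E <= W - r%:E -> a%:E < W - (r + a)%:E.
Proof. by case: W => [w| |] //= ha _; rewrite -?EFinD -?EFinB ?lee_fin ?lte_fin; lra. Qed.

Lemma lee_add_ltey (R : realType) (A B C D : \bar R) : A != -oo -> B != -oo ->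
  C < +oo -> D < +oo -> A + B <= C + D -> A < +oo /\ B < +oo.
Proof.
by case: A => [x| |]; case: B => [y| |]; case: C => [z| |]; case: D => [w| |] //=;
  rewrite ?ltey.
Qed.

Lemma convex_seq_lt (R : realType) (r : nat -> R) (c t : nat) :
  (forall u, (u.+2 <= c)%N -> (r u.+1 + r u.+1 <= r u + r u.+2)%R) ->
  (t < c)%N -> (r t < r t.+1)%R -> (r t < r c)%R.
Proof.
move=> r_convex ltc r_incr.
have incr m : (t + m < c)%N ->
    (r (t + m)%N < r (t + m).+1)%R /\ (r t < r (t + m).+1)%R.
  elim: m => [|m IH] hm; first by rewrite addn0; split.
  have [IH1 IH2] := IH ltac:(lia).
  have := r_convex (t + m)%N ltac:(lia); rewrite !addnS => h; split; lra.
by have := (incr (c - t.+1)%N ltac:(lia)).2; rewrite (_ : (t + _).+1 = c) //; lia.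
Qed.

Lemma move_id n (z : pt n) lam (i : 'I_n) : move z lam i i = z.
Proof. by apply/funext => m; rewrite /move subrr mulr0 addr0. Qed.

Lemma move0 n (z : pt n) (i j : 'I_n) : move z 0%:Z i j = z.
Proof. by apply/funext => m; rewrite /move mul0r addr0. Qed.

Lemma move_moveD n (z : pt n) (s t : int) (i j : 'I_n) :
  move (move z s i j) t i j = move z (s + t) i j.
Proof. by apply/funext => m; rewrite /move; ring. Qed.

Lemma move_moveS n (z : pt n) (t : nat) (i j : 'I_n) :
  move (move z t%:Z i j) 1 i j = move z t.+1%:Z i j.
Proof. by rewrite move_moveD -addn1 PoszD. Qed.

Section MconvexSlopes.
Variables (R : realType) (n : nat) (f : pt n -> \bar R).
Hypothesis f_neq_ninfty : forall x, f x != -oo.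
Hypothesis f_Mconvex : Mconvex f.
Hypothesis f_dom_bounded : dom_bounded f.

Definition slopes_ge (a : R) (z : pt n) := forall i j, a%:E <= fder f z i j.

Definition row_gt (a : R) (z : pt n) (i : 'I_n) :=
  forall j, j != i -> a%:E < fder f z i j.

Lemma fineK_dom (z : pt n) : dom f z -> (fine (f z))%:E = f z.
Proof. by move=> dz; apply: fineK; rewrite fin_numE f_neq_ninfty -ltey dz. Qed.

Lemma fder_diag (rz : R) (z : pt n) (i : 'I_n) : f z = rz%:E -> fder f z i i = 0.
Proof. by move=> fz; rewrite /fder move_id fz subee. Qed.

Lemma fder_lt0_neq (rz : R) (z : pt n) (k l : 'I_n) :
  f z = rz%:E -> fder f z k l < 0 -> k != l.
Proof. by move=> fz; apply: contraTneq => ->; rewrite (fder_diag _ fz) ltxx. Qed.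

Lemma fder_gt_ninfty (rz : R) (z : pt n) (i j : 'I_n) :
  f z = rz%:E -> -oo < fder f z i j.
Proof.
move=> fz; rewrite /fder fz.
by case: (f _) (f_neq_ninfty (move z 1 i j)) => [w| |] //= _; rewrite ltNyr.
Qed.

(* The exchange axiom between [z + chi_k - chi_l + chi_i - chi_j] and [z] at
   coordinate [k] can only return the index [l] or [j]. *)
Lemma unit_exchange (z : pt n) (i j k l : 'I_n) : dom f z -> k != l -> j != k ->
  let X := move (move z 1 k l) 1 i j in
  f (move z 1 i j) + f (move z 1 k l) <= f X + f z \/
  f (move z 1 i l) + f (move z 1 k j) <= f X + f z.
Proof.
move=> dz nkl njk X.
have [Xinf|nXinf] := eqVneq (f X) +oo.
  by left; rewrite Xinf addye ?leey ?f_neq_ninfty.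
have dX : dom f X by rewrite /dom ltey.
have hk : (z k < X k)%R.
  have nkj : k != j by rewrite eq_sym.
  rewrite /X /move /chi eqxx (negbTE nkl) (negbTE nkj).
  by case: (k == i) => /=; lia.
have [j' [hj' hex]] := f_Mconvex.2 _ _ dX dz k hk.
have [ejl|njl] := eqVneq j' l.
  rewrite ejl (_ : move X (-1) k l = move z 1 i j) in hex; first by left.
  by apply/funext => m; rewrite /X /move; ring.
have [ejj|njj] := eqVneq j' j.
  rewrite ejj (_ : move X (-1) k j = move z 1 i l) in hex; first by right.
  by apply/funext => m; rewrite /X /move; ring.
move: hj'; rewrite /X /move /chi (negbTE njl) (negbTE njj).
by case: (j' == k); case: (j' == i) => /=; lia.
Qed.

Section UnitMove.
Variables (a rz : R) (z : pt n) (k l : 'I_n).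
Hypotheses (a_lt0 : (a < 0)%R) (fz : f z = rz%:E) (z_slopes : slopes_ge a z)
  (fder_kl : fder f z k l = a%:E).
Local Notation z' := (move z 1 k l).

Let nkl : k != l.
Proof. by apply: fder_lt0_neq fz _; rewrite fder_kl lte_fin. Qed.

Lemma f_move_unit : f z' = (rz + a)%:E.
Proof.
move: fder_kl; rewrite /fder fz.
by have := f_neq_ninfty z'; case: (f z') => [w| |] //= _ [<-]; congr EFin; ring.
Qed.

Lemma fder_move_unit_back (i : 'I_n) : a%:E < fder f z' i k.
Proof.
rewrite /fder f_move_unit.
have -> : move z' 1 i k = move z 1 i l by apply/funext => m; rewrite /move; ring.
by apply: lte_sub_addr_lt0 => //; rewrite -fz; apply: z_slopes.
Qed.

Lemma fder_move_unit_cases (i j : 'I_n) : j != k ->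
  fder f z i j <= fder f z' i j \/
  fder f z i l <= fder f z' i j /\ fder f z k j <= fder f z' i j.
Proof.
move=> njk; have dz : dom f z by rewrite /dom fz ltey.
have lee_fder u v : f u + f v <= f (move z' 1 i j) + f z ->
    a%:E <= f v - rz%:E -> f u - rz%:E <= fder f z' i j.
  move=> huv hv; rewrite /fder f_move_unit.
  by apply: lee_exchange hv; rewrite ?f_neq_ninfty // -fz.
have fz'_a : a%:E <= f z' - rz%:E.
  by rewrite f_move_unit -EFinB lee_fin; lra.
case: (unit_exchange i dz nkl njk) => hex; [left | right].
  by rewrite /fder fz; apply: lee_fder hex fz'_a.
rewrite /fder fz; split.
  by apply: lee_fder hex _; rewrite -fz; apply: z_slopes.
apply: (lee_fder (move z 1 k j) (move z 1 i l)); first by rewrite addeC.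
by rewrite -fz; apply: z_slopes.
Qed.

Lemma slopes_ge_move_unit : slopes_ge a z'.
Proof.
move=> i j; have [->|njk] := eqVneq j k; first exact/ltW/fder_move_unit_back.
by case: (fder_move_unit_cases i njk) => [|[]] h *; apply: le_trans (z_slopes _ _) h.
Qed.

Lemma row_gt_move_unit (i : 'I_n) : i != k -> row_gt a z i -> row_gt a z' i.
Proof.
move=> nik row_i j nji; have [->|njk] := eqVneq j k; first exact: fder_move_unit_back.
case: (fder_move_unit_cases i njk) => [|[+ _]]; apply: lt_le_trans; first exact: row_i.
have [<-|nli] := eqVneq l i; last exact: row_i.
by rewrite (fder_diag _ fz) lte_fin.
Qed.

Lemma fder_move_unit_row (j : 'I_n) : j != l -> fder f z k j <= fder f z' k j.
Proof.
move=> njl; have [->|njk] := eqVneq j k.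
  by rewrite (fder_diag _ fz) (fder_diag _ f_move_unit).
by case: (fder_move_unit_cases k njk) => [|[]].
Qed.

End UnitMove.

Lemma Mconvex_line (y : pt n) (k l : 'I_n) (u v : nat) : k != l -> (u <= v)%N ->
  dom f (move y u%:Z k l) -> dom f (move y v.+2%:Z k l) ->
  f (move y u.+1%:Z k l) + f (move y v.+1%:Z k l) <=
  f (move y u%:Z k l) + f (move y v.+2%:Z k l).
Proof.
move=> nkl uv du dv.
have hk : (move y u%:Z k l k < move y v.+2%:Z k l k)%R.
  by rewrite /move /chi eqxx (negbTE nkl) /=; lia.
have [j [hj hex]] := f_Mconvex.2 _ _ dv du k hk.
have ejl : j = l.
  apply/eqP; apply: contraLR hj => njl.
  by rewrite /move /chi (negbTE njl); case: (j == k) => /=; lia.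
rewrite ejl move_moveS (_ : move _ (-1) k l = move y v.+1%:Z k l) in hex.
  by rewrite addeC [X in _ <= X]addeC.
by rewrite move_moveD (_ : v.+2%:Z + -1 = v.+1%:Z)%R // -addn1 PoszD addrK.
Qed.

Lemma dom_move_segment (y : pt n) (k l : 'I_n) (c : nat) : k != l ->
  dom f y -> dom f (move y c%:Z k l) ->
  forall t, (t <= c)%N -> dom f (move y t%:Z k l).
Proof.
move=> nkl dy dc.
have ends m : (2 * m <= c)%N ->
    dom f (move y m%:Z k l) /\ dom f (move y (c - m)%:Z k l).
  elim: m => [|m IH] hm; first by rewrite move0 subn0.
  have [IH1 IH2] := IH ltac:(lia).
  rewrite (_ : (c - m)%N = (c - m.+2).+2) in IH2; last by lia.
  rewrite (_ : (c - m.+1)%N = (c - m.+2).+1); last by lia.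
  apply: (lee_add_ltey (f_neq_ninfty _) (f_neq_ninfty _) IH1 IH2).
  by apply: Mconvex_line => //; lia.
move=> t ht; have [h|h] := leqP (2 * t) c; first exact: (ends t h).1.
by have := (ends (c - t)%N ltac:(lia)).2; rewrite (_ : (c - (c - t))%N = t) //; lia.
Qed.

Lemma cbarP (a ry : R) (y : pt n) (k l : 'I_n) :
  f y = ry%:E -> k != l -> fder f y k l = a%:E ->
  lin_step f y k l (cbar f y k l) /\
  forall m, lin_step f y k l m -> (m <= cbar f y k l)%N.
Proof.
move=> fy nkl fder_kl; apply: (xgetPex 0%N (P := fun c =>
  lin_step f y k l c /\ forall m, lin_step f y k l m -> (m <= c)%N)).
have [B hB] := f_dom_bounded.
pose P m := `[< lin_step f y k l m >].
have P0 : P 0%N by apply/asboolP; rewrite /lin_step move0 fy subee // mul0e.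
have P_bounded m : P m -> (m <= `|B| * 2)%N.
  move=> /asboolP; rewrite /lin_step fder_kl fy => hm.
  have dm : dom f (move y m%:Z k l).
    move: hm; rewrite /dom; have := f_neq_ninfty (move y m%:Z k l).
    by case: (f _) => [w| |] //= _ _; rewrite ltey.
  have := hB _ dm k; have := hB y (ltac:(by rewrite /dom fy ltey)) k.
  by rewrite /move /chi eqxx (negbTE nkl) /= !ler_norml; lia.
case: (ex_maxnP (ex_intro P 0%N P0) P_bounded) => c /asboolP Pc c_max.
by exists c; split => // m /asboolP /c_max.
Qed.

Section LongStep.
Variables (a ry : R) (y : pt n) (k l : 'I_n).
Hypotheses (a_lt0 : (a < 0)%R) (fy : f y = ry%:E) (y_slopes : slopes_ge a y)
  (fder_kl : fder f y k l = a%:E).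
Local Notation c := (cbar f y k l).
Local Notation yt t := (move y t%:Z k l).

Let nkl : k != l.
Proof. by apply: fder_lt0_neq fy _; rewrite fder_kl lte_fin. Qed.

Lemma f_move_cbar : f (yt c) = (ry + c%:R * a)%:E.
Proof.
have [+ _] := cbarP fy nkl fder_kl; rewrite /lin_step fder_kl fy.
have := f_neq_ninfty (yt c); case: (f _) => [w| |] //= _.
by move=> [<-]; congr EFin; ring.
Qed.

Lemma dom_move_line (t : nat) : (t <= c)%N -> dom f (yt t).
Proof.
move=> ht; apply: (dom_move_segment nkl _ _ ht); rewrite /dom.
  by rewrite fy ltey.
by rewrite f_move_cbar ltey.
Qed.

(* [r s = f(y_s) - s a] is convex along the line and [r t = r c], so it cannot
   increase at [t]. *)
Lemma fder_move_line_eq (t : nat) : (t < c)%N -> f (yt t) = (ry + t%:R * a)%:E ->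
  a%:E <= fder f (yt t) k l -> fder f (yt t) k l = a%:E.
Proof.
move=> ltc ft ge_a.
pose r s := (fine (f (yt s)) - s%:R * a)%R.
have fE s : (s <= c)%N -> f (yt s) = (r s + s%:R * a)%:E.
  by move=> hs; rewrite /r subrK fineK_dom //; apply: dom_move_line.
have r_convex u : (u.+2 <= c)%N -> (r u.+1 + r u.+1 <= r u + r u.+2)%R.
  move=> hu; have hu1 := ltnW hu; have hu0 := ltnW hu1.
  have := Mconvex_line nkl (leqnn u) (dom_move_line hu0) (dom_move_line hu).
  by rewrite (fE _ hu0) (fE _ hu1) (fE _ hu) -!EFinD lee_fin !mulrSr; lra.
apply/eqP; apply: contraT => ne_a.
have : (r t < r t.+1)%R.
  move: ge_a; rewrite le_eqVlt eq_sym (negbTE ne_a) /= /fder move_moveS.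
  by rewrite (fE _ ltc) (fE _ (ltnW ltc)) -EFinB lte_fin mulrSr; lra.
move=> /(convex_seq_lt r_convex ltc); rewrite /r ft f_move_cbar /=; lra.
Qed.

Lemma move_line_inv (t : nat) : (t <= c)%N ->
  [/\ f (yt t) = (ry + t%:R * a)%:E, slopes_ge a (yt t),
      (forall i, i != k -> row_gt a y i -> row_gt a (yt t) i) &
      (forall j, j != l -> fder f y k j <= fder f (yt t) k j)].
Proof.
elim: t => [|t IH] ht; first by rewrite move0 fy mul0r addr0.
have [ft t_slopes t_rows t_row_k] := IH (ltnW ht).
have fder_t := fder_move_line_eq ht ft (t_slopes k l).
rewrite -move_moveS; split.
- by rewrite (f_move_unit ft fder_t) mulrSr; congr EFin; ring.
- exact: slopes_ge_move_unit a_lt0 ft t_slopes fder_t.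
- by move=> i nik /(t_rows i nik) /(row_gt_move_unit a_lt0 ft t_slopes fder_t nik).
- move=> j njl; apply: le_trans (t_row_k j njl) _.
  exact: (fder_move_unit_row a_lt0 ft t_slopes fder_t njl).
Qed.

Lemma fder_move_cbar_gt : a%:E < fder f (yt c) k l.
Proof.
have [fc c_slopes _ _] := move_line_inv (leqnn c).
rewrite lt_neqAle c_slopes andbT; apply/negP => /eqP eq_a.
have := f_move_unit fc (esym eq_a); rewrite move_moveS => fc1.
have : lin_step f y k l c.+1.
  by rewrite /lin_step fc1 fy fder_kl -EFinB -EFinM -addn1 natrD; congr EFin; ring.
by move=> /(cbarP fy nkl fder_kl).2; rewrite ltnn.
Qed.

End LongStep.

Definition incslope_inv (a : R) (S : seq 'I_n) (y : pt n) :=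
  [/\ exists ry, f y = ry%:E, slopes_ge a y & forall i, i \in S -> row_gt a y i].

Lemma incstep_inv (a : R) (S T : seq 'I_n) (y : pt n) (i j0 : 'I_n) :
  (a < 0)%R -> incslope_inv a S y ->
  (forall j, j \in T -> j != i -> a%:E < fder f y i j) ->
  let y1 := incstep f a%:E y (i, j0) in
  incslope_inv a S y1 /\ forall j, j \in j0 :: T -> j != i -> a%:E < fder f y1 i j.
Proof.
move=> a_lt0 [[ry fy] y_slopes y_rows] row_T y1; rewrite /y1 /incstep /=.
case: eqP => [fder_ij0|ne_a]; last first.
  split; first by split => //; exists ry.
  move=> j; rewrite inE => /orP[/eqP ->|/row_T//] _.
  by rewrite lt_neqAle eq_sym y_slopes andbT; apply/eqP.
have nij0 : i != j0 by apply: fder_lt0_neq fy _; rewrite fder_ij0 lte_fin.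
have [fc c_slopes c_rows c_row_i] := move_line_inv a_lt0 fy y_slopes fder_ij0 (leqnn _).
split; first split => //.
- by exists (ry + (cbar f y i j0)%:R * a)%R.
- move=> i' /y_rows row_i'; have [ei|nei] := eqVneq i' i; last exact: c_rows.
  by have := row_i' j0; rewrite ei eq_sym nij0 fder_ij0 ltxx => /(_ isT).
move=> j; have [-> _ _|nej] := eqVneq j j0.
  exact: fder_move_cbar_gt a_lt0 fy y_slopes fder_ij0.
rewrite inE (negbTE nej) /= => jT nji.
exact: lt_le_trans (row_T j jT nji) (c_row_i j nej).
Qed.

Lemma foldl_incstep_row (a : R) (S : seq 'I_n) (i : 'I_n) (L T : seq 'I_n) (y : pt n) :
  (a < 0)%R -> incslope_inv a S y ->
  (forall j, j \in T -> j != i -> a%:E < fder f y i j) ->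
  let y' := foldl (incstep f a%:E) y [seq (i, j) | j <- L] in
  incslope_inv a S y' /\ forall j, j \in T ++ L -> j != i -> a%:E < fder f y' i j.
Proof.
move=> a_lt0; elim: L T y => [|j0 L IH] T y y_inv row_T /=.
  by split => // j; rewrite cats0; apply: row_T.
have [inv1 row1] := incstep_inv j0 a_lt0 y_inv row_T.
have [inv2 row2] := IH _ _ inv1 row1.
split => // j jTL; apply: row2.
by move: jTL; rewrite !mem_cat !inE => /orP[->|/orP[->|->]]; rewrite ?orbT.
Qed.

Lemma foldl_incstep_inv (a : R) (tau : 'I_n -> seq 'I_n) :
  (a < 0)%R -> (forall i j, j != i -> j \in tau i) ->
  forall (sig S : seq 'I_n) (y : pt n), incslope_inv a S y ->
  incslope_inv a (S ++ sig)
    (foldl (incstep f a%:E) y [seq (i, j) | i <- sig, j <- tau i]).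
Proof.
move=> a_lt0 tau_full; elim=> [|i sig IH] S y y_inv /=; first by rewrite cats0.
rewrite foldl_cat -cat_rcons; apply: IH.
have row_nil j : j \in [::] -> j != i -> a%:E < fder f y i j by [].
have [[fy' y'_slopes y'_rows] row_i] := foldl_incstep_row (tau i) a_lt0 y_inv row_nil.
split => // i'; rewrite mem_rcons inE => /orP[/eqP -> j nji|]; last exact: y'_rows.
exact: row_i (tau_full i j nji) nji.
Qed.

End MconvexSlopes.

Theorem mainTheorem4 (R : realType) (n : nat) (f : pt n -> \bar R)
  (f_noninf : forall x, f x != -oo)
  (hM : Mconvex f) (hB : dom_bounded f)
  (x : pt n) (hx : dom f x) (hphi : phi f x < 0)
  (sigma : seq 'I_n) (tau : 'I_n -> seq 'I_n)
  (hsigma : perm_eq sigma (enum 'I_n))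
  (htau : forall i : 'I_n, perm_eq (tau i) [seq j <- enum 'I_n | j != i]) :
  phi f x < phi f (M_IncSlope f x sigma tau).
Proof.
have fx := esym (fineK_dom f_noninf hx).
have phi_fin : phi f x \is a fin_num.
  rewrite fin_numE -ltNye (lt_eqF (lt_trans hphi (ltey 0))) andbT.
  by apply: lt_bigmin => // i _; apply: lt_bigmin => // j _; apply: fder_gt_ninfty fx.
have hpa := esym (fineK phi_fin); set a := fine (phi f x) in hpa.
have a_lt0 : (a < 0)%R by rewrite -lte_fin -hpa.
have x_inv : incslope_inv f a [::] x.
  split; [by exists (fine (f x)) | | by []].
  by move=> i j; rewrite -hpa; exact: le_trans (bigmin_le _ i _) (bigmin_le _ j _).
have tau_full i j : j != i -> j \in tau i.
  by rewrite (perm_mem (htau i)) mem_filter mem_enum andbT.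
have [[ry fy] _ y_rows] := foldl_incstep_inv f_noninf hM hB a_lt0 tau_full sigma x_inv.
rewrite /M_IncSlope hpa; set y := foldl _ _ _ in fy y_rows *.
apply: lt_bigmin => [|i _]; first exact: ltey.
apply: lt_bigmin => [|j _]; first exact: ltey.
have [->|nji] := eqVneq j i; first by rewrite (fder_diag _ fy) lte_fin.
by apply: y_rows nji; rewrite (perm_mem hsigma) mem_enum.
Qed.
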